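(* Let $\kappa_n>0$, $\gamma>0$ and $\chi_n,\tilde\omega_n\in\mathbb{R}$ satisfy $2\kappa_n\chi_n\le\gamma$ (equivalently, $4\kappa_nS_n-Q_n^2\le 0$ where $S_n=\gamma\chi_n/2$ and $Q_n=-\gamma$ is the value of $-(\gamma+i\Omega-i\tilde\omega_n)$ at $\Omega=\tilde\omega_n$). Then there exists $\epsilon>0$ such that for every real $\Omega$ with $|\tilde\omega_n-\Omega|\le\epsilon$, the solution $F_n$ of $$\frac{\mathrm{d}}{\mathrm{d}t}F_n(t)=\kappa_nF_n(t)^2-(\gamma+i\Omega-i\tilde\omega_n)F_n(t)+\frac{\gamma\chi_n}{2},\qquad F_n(0)=0,$$ converges to a constant as $t\to\infty$; that is, the trajectory of the atom–cavity mean-value dynamics converges to a Markovian behavior even though the environmental frequency $\Omega$ is only known to lie within $\epsilon$ of $\tilde\omega_n$.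
   Context: Setting: an atom level transition with frequency $\tilde\omega_n$ coupled to a non-Markovian environment with memory kernel $\alpha(t,s)=\frac{\gamma}{2}e^{-\gamma|t-s|-i\Omega(t-s)}$, where $\Omega$ is an uncertain environmental central frequency; $\kappa_n$ is the coupling (decay) rate to the environment and $\chi_n$ a real constant. The non-Markovian decay rate enters the linear mean-value equations for $\langle\sigma_n^+\sigma_n^-\rangle,\langle\sigma_n^+a\rangle,\langle\sigma_n^-a^\dagger\rangle,\langle a^\dagger a\rangle$ through the coefficients $\kappa_nF_n(t)$, $\kappa_nF_n^*(t)$; the dynamics is said to converge to Markovian behavior when $F_n(t)$ converges to a constant as $t\to\infty$. *)

From Stdlib Require Import Reals.
From Coquelicot Require Import Coquelicot.
Open Scope R_scope.

Definition riccati_rhs (kappa gamma chi omega Omega : R) (z : C) : C :=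
  (RtoC kappa * z * z
   - (RtoC gamma + Ci * RtoC Omega - Ci * RtoC omega) * z
   + RtoC (gamma * chi / 2))%C.

Definition is_riccati_solution (kappa gamma chi omega Omega : R) (F : R -> C) : Prop :=
  F 0 = RtoC 0 /\
  forall t : R, 0 <= t -> is_derive F t (riccati_rhs kappa gamma chi omega Omega (F t)).

Definition converges_at_infty (F : R -> C) : Prop :=
  exists L : C, filterlim F (Rbar_locally p_infty) (locally L).

From Stdlib Require Import Reals Lra.
From Coquelicot Require Import Coquelicot.
Open Scope R_scope.

(* The linearisation of F' = k F^2 - a F + s: let mu be a square root of the discriminant
   a^2 - 4ks, r = (a - mu)/(2k) the corresponding zero of the right-hand side, and G the
   solution of the linear equation G' = mu G + (a - mu), G(0) = 2.  Then r + (mu - a)/(k G)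
   solves the initial value problem F(0) = 0, and it is the only solution, because
   P = k G (F - r) + (a - mu) satisfies the linear equation P' = k (F - r) P with P(0) = 0
   and hence vanishes by Gronwall's lemma.  So every solution tends to r as soon as |G|
   grows at least linearly.
   For a = gamma + i (Omega - omega) and s = gamma chi / 2, the hypothesis
   2 kappa chi <= gamma makes the discriminant either zero, and then G = 2 + a t, or not a
   non-positive real; in the latter case mu can be chosen with Re mu > 0 and
   Re (a conj(mu)) > 0, which makes |a - mu| < |a + mu|, so that
   G = ((a + mu) e^(mu t) - (a - mu)) / mu grows exponentially. *)

(* [ring] and [field] need the remaining equation typed at [R] or [C], not at the carrier
   of a normed module. *)
Ltac derive_up_to_eq H :=
  apply (eq_ind _ (is_derive _ _) H);
  match goal with |- @eq _ ?x ?y => first [change (@eq R x y) | change (@eq C x y)] end.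

Lemma is_derive_C (f : R -> C) (x : R) (l : C) :
  is_derive f x l <->
  is_derive (fun t => Re (f t)) x (Re l) /\ is_derive (fun t => Im (f t)) x (Im l).
Proof.
  split.
  - intros Hf; split.
    + apply (filterdiff_comp' f Re x _ Re Hf), filterdiff_linear, is_linear_fst.
    + apply (filterdiff_comp' f Im x _ Im Hf), filterdiff_linear, is_linear_snd.
  - intros [Hre Him].
    apply (filterdiff_ext (fun t => (Re (f t), Im (f t)))); [intros t; now destruct (f t)|].
    apply (filterdiff_comp'_2 _ _ (fun u v => (u, v)) x _ _ (fun u v => (u, v)) Hre Him).
    apply (filterdiff_ext_lin _ (fun t => t)).
    + apply (filterdiff_ext (fun t => t)); [now intros []|].
      apply filterdiff_linear, is_linear_id.
    + now intros [].
Qed.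

Lemma is_derive_continuity_pt (f : R -> R) (x l : R) :
  is_derive f x l -> continuity_pt f x.
Proof.
  intros H; apply continuity_pt_filterlim.
  apply (ex_derive_continuous (K := R_AbsRing) (V := R_NormedModule)); now exists l.
Qed.

Lemma gronwall_zero (g g' : R -> R) (M T : R) :
  0 <= T -> g 0 = 0 ->
  (forall t, 0 <= t <= T -> is_derive g t (g' t)) ->
  (forall t, 0 <= t <= T -> 0 <= g t) ->
  (forall t, 0 <= t <= T -> g' t <= M * g t) ->
  g T = 0.
Proof.
  intros HT Hg0 Hder Hpos Hbound.
  set (h := fun t => g t * exp (- M * t)).
  assert (Hh : forall t, 0 <= t <= T -> is_derive h t ((g' t - M * g t) * exp (- M * t))).
  { intros t Ht.
    assert (He : is_derive (fun u => exp (- M * u)) t (- M * exp (- M * t)))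
      by (auto_derive; auto; ring).
    derive_up_to_eq (Derive.is_derive_mult _ _ t _ _ (Hder t Ht) He); ring. }
  destruct (MVT_gen h 0 T (fun t => (g' t - M * g t) * exp (- M * t))) as [xi [Hxi Hmvt]];
    rewrite ?Rmin_left, ?Rmax_right in * by lra.
  - intros t Ht; apply Hh; lra.
  - intros t Ht; apply (is_derive_continuity_pt _ _ _ (Hh t Ht)).
  - assert (Hdecr : (g' xi - M * g xi) * exp (- M * xi) <= 0).
    { pose proof (Hbound xi Hxi); pose proof (exp_pos (- M * xi)); nra. }
    assert (HhT : h T <= 0) by (unfold h in *; rewrite Hg0 in Hmvt; nra).
    pose proof (Hpos T (conj HT (Rle_refl T))); pose proof (exp_pos (- M * T)).
    unfold h in HhT; nra.
Qed.

Open Scope C_scope.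

Lemma is_derive_Cconst (c : C) (x : R) : is_derive (fun _ : R => c) x (0 : C).
Proof. exact (@is_derive_const R_AbsRing C_R_NormedModule c x). Qed.

Lemma is_derive_Cplus (f g : R -> C) (x : R) (lf lg : C) :
  is_derive f x lf -> is_derive g x lg -> is_derive (fun t => f t + g t) x (lf + lg).
Proof. exact (@is_derive_plus R_AbsRing C_R_NormedModule f g x lf lg). Qed.

Lemma is_derive_Cmult (f g : R -> C) (x : R) (lf lg : C) :
  is_derive f x lf -> is_derive g x lg ->
  is_derive (fun t => f t * g t) x (lf * g x + f x * lg).
Proof.
  rewrite !is_derive_C; unfold Re, Im; intros [Hf1 Hf2] [Hg1 Hg2]; simpl; split.
  - derive_up_to_eq (is_derive_minus _ _ x _ _
      (Derive.is_derive_mult _ _ x _ _ Hf1 Hg1) (Derive.is_derive_mult _ _ x _ _ Hf2 Hg2)).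
    unfold minus, plus, opp; simpl; ring.
  - derive_up_to_eq (is_derive_plus _ _ x _ _
      (Derive.is_derive_mult _ _ x _ _ Hf1 Hg2) (Derive.is_derive_mult _ _ x _ _ Hf2 Hg1)).
    unfold plus; simpl; ring.
Qed.

Lemma is_derive_Cnorm2 (f : R -> C) (x : R) (l : C) :
  is_derive f x l ->
  is_derive (fun t => Re (f t) ^ 2 + Im (f t) ^ 2)%R x
    (2 * (Re (f x) * Re l + Im (f x) * Im l))%R.
Proof.
  rewrite is_derive_C; intros [H1 H2].
  derive_up_to_eq (is_derive_plus _ _ x _ _
    (is_derive_pow _ 2 x _ H1) (is_derive_pow _ 2 x _ H2)).
  unfold plus; simpl; ring.
Qed.

Lemma is_derive_Cinv (g : R -> C) (x : R) (l : C) :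
  is_derive g x l -> g x <> 0 -> is_derive (fun t => / g t) x (- l / (g x * g x)).
Proof.
  intros Hg Hgx.
  pose proof (is_derive_Cnorm2 g x l Hg) as Hnorm_deriv.
  assert (Hnorm : (Re (g x) ^ 2 + Im (g x) ^ 2 <> 0)%R).
  { intros H; apply Hgx; destruct (g x) as [u v]; simpl in H.
    assert (u = 0%R) by nra; assert (v = 0%R) by nra; subst; reflexivity. }
  rewrite is_derive_C in Hg |- *; destruct Hg as [Hg1 Hg2].
  unfold Re, Im, Cinv in *; cbn [fst snd]; split.
  - derive_up_to_eq (is_derive_div _ _ x _ _ Hg1 Hnorm_deriv Hnorm).
    revert Hnorm; destruct (g x) as [u v], l as [p q]; cbn -[pow]; intros Hnorm.
    field; split; nra.
  - derive_up_to_eq (is_derive_div _ _ x _ _ (is_derive_opp _ x _ Hg2) Hnorm_deriv Hnorm).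
    unfold opp; simpl.
    revert Hnorm; destruct (g x) as [u v], l as [p q]; cbn -[pow]; intros Hnorm.
    field; split; nra.
Qed.

Definition Cexp (z : C) : C := (exp (Re z) * cos (Im z), exp (Re z) * sin (Im z))%R.

Lemma Cexp_0 : Cexp 0 = 1.
Proof.
  unfold Cexp; simpl; rewrite exp_0, cos_0, sin_0.
  apply injective_projections; simpl; ring.
Qed.

Lemma Cmod_Cexp (z : C) : Cmod (Cexp z) = exp (Re z).
Proof.
  unfold Cmod, Cexp; simpl.
  transitivity (sqrt (exp (Re z) ^ 2)).
  - f_equal; pose proof (sin2_cos2 (Im z)) as Hsc; unfold Rsqr in Hsc.
    transitivity (exp (Re z) ^ 2 * (sin (Im z) * sin (Im z) + cos (Im z) * cos (Im z)))%R.
    + ring.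
    + rewrite Hsc; ring.
  - apply sqrt_pow2; left; apply exp_pos.
Qed.

Lemma is_derive_Cexp_scal (mu : C) (x : R) :
  is_derive (fun t : R => Cexp (mu * t)) x (mu * Cexp (mu * x)).
Proof.
  apply is_derive_C; unfold Cexp, Re, Im; simpl; split; auto_derive; auto; unfold Rminus; ring.
Qed.

Lemma is_derive_Csub_const (f : R -> C) (z : C) (x : R) (l : C) :
  is_derive f x l -> is_derive (fun t => f t - z) x l.
Proof.
  intros Hf; derive_up_to_eq (is_derive_Cplus f (fun _ => - z) x _ _ Hf (is_derive_Cconst (- z) x)).
  ring.
Qed.

Lemma is_derive_continuity_Re (f : R -> C) (x : R) (l : C) :
  is_derive f x l -> continuity_pt (fun t => Re (f t)) x.
Proof. rewrite is_derive_C; intros [H _]; exact (is_derive_continuity_pt _ _ _ H). Qed.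

Lemma linear_ode_zero (P c : R -> C) :
  P 0 = 0 ->
  (forall t, 0 <= t -> is_derive P t (c t * P t)) ->
  (forall t, 0 <= t -> continuity_pt (fun u => Re (c u)) t) ->
  forall t, 0 <= t -> P t = 0.
Proof.
  intros HP0 HP Hc T HT.
  destruct (continuity_ab_maj (fun u => Re (c u)) 0 T HT (fun t Ht => Hc t (proj1 Ht)))
    as [tmax [Hmax _]].
  set (g := fun t => (Re (P t) ^ 2 + Im (P t) ^ 2)%R).
  assert (HgT : g T = 0%R).
  { apply (gronwall_zero g (fun t => 2 * Re (c t) * g t)%R (2 * Re (c tmax))%R T HT).
    - unfold g; rewrite HP0; simpl; ring.
    - intros t Ht; derive_up_to_eq (is_derive_Cnorm2 P t _ (HP t (proj1 Ht))).
      unfold g, Re, Im; simpl; ring.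
    - intros t _; unfold g; nra.
    - intros t Ht; assert (0 <= g t)%R by (unfold g; nra).
      pose proof (Hmax t Ht); nra. }
  apply Cmod_eq_0; change (sqrt (g T) = 0%R); rewrite HgT; apply sqrt_0.
Qed.

Definition riccati (k a s z : C) : C := k * z * z - a * z + s.

Definition riccati_ivp_solution (k a s : C) (F : R -> C) : Prop :=
  F 0 = 0 /\ forall t, 0 <= t -> is_derive F t (riccati k a s (F t)).

Definition riccati_ivp_converges (k a s : C) : Prop :=
  (exists F, riccati_ivp_solution k a s F) /\
  (forall F, riccati_ivp_solution k a s F -> converges_at_infty F).

Section RiccatiLinearization.

Variables (k a s mu : C) (G : R -> C) (B : R).
Hypothesis k_neq0 : k <> 0.
Hypothesis mu_sqr : mu * mu = a * a - 4 * k * s.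
Hypothesis G_0 : G 0 = 2.
Hypothesis G_deriv : forall t, 0 <= t -> is_derive G t (mu * G t + (a - mu)).
Hypothesis B_pos : 0 < B.
Hypothesis G_growth : forall t, 0 <= t -> B * t < Cmod (G t).

Let r : C := (a - mu) / (2 * k).
Let c : C := (mu - a) / k.
Let closed_form (t : R) : C := r + c / G t.

Lemma G_neq0 (t : R) : 0 <= t -> G t <> 0.
Proof.
  intros Ht HG; pose proof (G_growth t Ht) as Hgrow.
  rewrite HG, Cmod_0 in Hgrow; pose proof (Rmult_le_pos B t (Rlt_le _ _ B_pos) Ht); lra.
Qed.

Lemma s_eq_discriminant : s = (a * a - mu * mu) / (4 * k).
Proof. rewrite mu_sqr; field; exact k_neq0. Qed.

Lemma riccati_closed_form_solves : riccati_ivp_solution k a s closed_form.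
Proof.
  split.
  - unfold closed_form, r, c; rewrite G_0; field; exact k_neq0.
  - intros t Ht.
    derive_up_to_eq (is_derive_Cplus (fun _ => r) (fun u => c / G u) t _ _ (is_derive_Cconst r t)
      (is_derive_Cmult (fun _ => c) (fun u => / G u) t _ _ (is_derive_Cconst c t)
        (is_derive_Cinv G t _ (G_deriv t Ht) (G_neq0 t Ht)))).
    unfold riccati, closed_form, r, c; rewrite s_eq_discriminant.
    field; split; [exact k_neq0 | exact (G_neq0 t Ht)].
Qed.

Lemma riccati_ivp_solution_eq_closed_form (F : R -> C) :
  riccati_ivp_solution k a s F -> forall t, 0 <= t -> F t = closed_form t.
Proof.
  intros [HF0 HF] t Ht.
  set (P := fun u => k * G u * (F u - r) + (a - mu)).
  assert (HP : P t = 0).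
  { apply (linear_ode_zero P (fun u => k * (F u - r))); [| | | exact Ht].
    - unfold P, r; rewrite HF0, G_0; field; exact k_neq0.
    - intros u Hu.
      derive_up_to_eq (is_derive_Cplus (fun u => k * G u * (F u - r)) (fun _ => a - mu) u _ _
        (is_derive_Cmult (fun u => k * G u) (fun u => F u - r) u _ _
          (is_derive_Cmult (fun _ => k) G u _ _ (is_derive_Cconst k u) (G_deriv u Hu))
          (is_derive_Csub_const F r u _ (HF u Hu)))
        (is_derive_Cconst (a - mu) u)).
      unfold P, riccati, r; rewrite s_eq_discriminant; field; exact k_neq0.
    - intros u Hu.
      apply (is_derive_continuity_Re (fun u => k * (F u - r)) u _
        (is_derive_Cmult (fun _ => k) (fun u => F u - r) u _ _ (is_derive_Cconst k u)
          (is_derive_Csub_const F r u _ (HF u Hu)))). }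
  assert (E : k * G t * (F t - r) = mu - a).
  { replace (mu - a) with (P t + (mu - a)) by (rewrite HP; ring); unfold P; ring. }
  unfold closed_form, c; rewrite <- E.
  field; split; [exact k_neq0 | exact (G_neq0 t Ht)].
Qed.

Lemma riccati_closed_form_lim : filterlim closed_form (Rbar_locally p_infty) (locally r).
Proof.
  apply filterlim_locally; intros eps.
  pose proof (cond_pos eps) as Heps.
  exists (Cmod c / (B * eps))%R; intros t Ht.
  assert (Ht0 : 0 <= t).
  { enough (0 <= Cmod c / (B * eps))%R by lra.
    apply Rdiv_le_0_compat; [apply Cmod_ge_0 | nra]. }
  apply C_NormedModule_mixin_compat1.
  replace (minus (closed_form t) r) with (c / G t)
    by (unfold closed_form, minus, plus, opp; simpl; ring).
  pose proof (G_growth t Ht0) as Hgrow.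
  pose proof (Rmult_le_pos B t (Rlt_le _ _ B_pos) Ht0).
  rewrite Cmod_div by exact (G_neq0 t Ht0).
  apply Rlt_div_l; [lra |].
  apply Rlt_div_l in Ht; nra.
Qed.

Theorem riccati_ivp_converges_of_linearization : riccati_ivp_converges k a s.
Proof.
  split; [exists closed_form; exact riccati_closed_form_solves |].
  intros F HF; exists r.
  apply (filterlim_ext_loc closed_form); [| exact riccati_closed_form_lim].
  exists 0%R; intros t Ht; symmetry.
  exact (riccati_ivp_solution_eq_closed_form F HF t (Rlt_le _ _ Ht)).
Qed.

End RiccatiLinearization.

Lemma exists_sqrt_Re_pos (D : C) : (Im D = 0 -> 0 < Re D) -> exists mu, 0 < Re mu /\ mu * mu = D.
Proof.
  intros HD; destruct D as [p q]; unfold Re, Im in HD; simpl in HD.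
  set (m := Cmod (p, q)).
  assert (Hm2 : (m * m = p * p + q * q)%R).
  { unfold m, Cmod; simpl; rewrite sqrt_sqrt; nra. }
  assert (Hm0 : 0 <= m) by apply Cmod_ge_0.
  assert (Hmp : 0 < m + p).
  { destruct (Req_dec q 0) as [Hq | Hq]; [specialize (HD Hq); nra |].
    assert (0 < q * q) by (apply Rsqr_pos_lt; exact Hq). nra. }
  set (x := sqrt ((m + p) / 2)).
  assert (Hx2 : (x * x = (m + p) / 2)%R) by (apply sqrt_sqrt; lra).
  assert (Hx : 0 < x) by (apply sqrt_lt_R0; lra).
  set (y := (q / (2 * x))%R).
  assert (Hxy : (2 * x * y = q)%R) by (unfold y; field; lra).
  assert (Hy2 : (y * y = (m - p) / 2)%R).
  { apply (Rmult_eq_reg_l (m + p)); [| lra].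
    transitivity (2 * (x * x) * (y * y))%R; [rewrite Hx2; field |].
    transitivity ((2 * x * y) * (2 * x * y) / 2)%R; [field | rewrite Hxy; nra]. }
  exists (x, y); split; [exact Hx |].
  apply injective_projections; simpl; nra.
Qed.

Lemma Re_mul_Cconj_pos (a mu : C) :
  0 < Re a -> 0 < Re mu -> Im (mu * mu) = Im (a * a) -> 0 < Re (a * Cconj mu).
Proof.
  destruct a as [a1 a2], mu as [m1 m2]; unfold Re, Im; simpl; intros Ha Hm Hsq.
  assert (Hprod : (m1 * m2 = a1 * a2)%R) by lra.
  assert (0 <= a2 * m2 * a1)%R.
  { replace (a2 * m2 * a1)%R with (m2 * (m1 * m2))%R by (rewrite Hprod; ring); nra. }
  assert (0 <= a2 * m2)%R by nra.
  nra.
Qed.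

Lemma Cmod_sub_lt_add (a b : C) : 0 < Re (a * Cconj b) -> Cmod (a - b) < Cmod (a + b).
Proof.
  destruct a as [a1 a2], b as [b1 b2]; unfold Re, Cmod; simpl; intros H.
  apply sqrt_lt_1_alt; rewrite !Rmult_1_r; split.
  - pose proof (Rle_0_sqr (a1 + - b1)); pose proof (Rle_0_sqr (a2 + - b2)); unfold Rsqr in *; lra.
  - lra.
Qed.

Lemma is_derive_RtoC (x : R) : is_derive (fun t : R => RtoC t) x (1 : C).
Proof.
  apply is_derive_C; unfold Re, Im; simpl; split; [apply (is_derive_id (K := R_AbsRing)) |].
  apply (is_derive_const (K := R_AbsRing) (V := R_NormedModule)).
Qed.

Lemma Cmod_affine_growth (a : C) (t : R) : Re a * t < Cmod (2 + a * t).
Proof.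
  pose proof (re_le_Cmod (2 + a * t)) as H; pose proof (Rle_abs (Re (2 + a * t))).
  unfold Re in *; simpl in *; lra.
Qed.

Lemma Cmod_exp_growth (a mu : C) (t : R) :
  0 < Re mu -> Cmod (a - mu) < Cmod (a + mu) -> 0 <= t ->
  Cmod (a + mu) * Re mu / Cmod mu * t < Cmod (((a + mu) * Cexp (mu * t) - (a - mu)) / mu).
Proof.
  intros Hmu Hlt Ht.
  assert (Hmu0 : mu <> 0) by (intros H; rewrite H in Hmu; simpl in Hmu; lra).
  pose proof (proj1 (Cmod_gt_0 mu) Hmu0) as Hmod.
  rewrite Cmod_div by exact Hmu0.
  unfold Rdiv; rewrite Rmult_assoc, (Rmult_comm (/ Cmod mu)), <- Rmult_assoc.
  apply Rmult_lt_compat_r; [apply Rinv_0_lt_compat; exact Hmod |].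
  pose proof (Cmod_triangle ((a + mu) * Cexp (mu * t) - (a - mu)) (a - mu)) as Htri.
  replace ((a + mu) * Cexp (mu * t) - (a - mu) + (a - mu)) with ((a + mu) * Cexp (mu * t)) in Htri
    by ring.
  rewrite Cmod_mult, Cmod_Cexp in Htri.
  replace (Re (mu * t)) with (Re mu * t)%R in Htri by (unfold Re; simpl; ring).
  pose proof (exp_ineq1_le (Re mu * t)).
  pose proof (Cmod_ge_0 (a - mu)).
  nra.
Qed.

Lemma riccati_ivp_converges_double_root (k a s : C) :
  k <> 0 -> 0 < Re a -> a * a - 4 * k * s = 0 -> riccati_ivp_converges k a s.
Proof.
  intros Hk Ha HD.
  apply (riccati_ivp_converges_of_linearization k a s 0 (fun t => 2 + a * t) (Re a)); auto.
  - rewrite HD; ring.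
  - ring.
  - intros t _.
    derive_up_to_eq (is_derive_Cplus (fun _ => 2) (fun u => a * u) t _ _ (is_derive_Cconst 2 t)
      (is_derive_Cmult (fun _ => a) RtoC t _ _ (is_derive_Cconst a t) (is_derive_RtoC t))).
    ring.
  - intros t _; apply Cmod_affine_growth.
Qed.

Lemma riccati_ivp_converges_simple_root (k a s mu : C) :
  k <> 0 -> mu * mu = a * a - 4 * k * s -> 0 < Re mu -> 0 < Re (a * Cconj mu) ->
  riccati_ivp_converges k a s.
Proof.
  intros Hk HD Hmu Hconj.
  assert (Hmu0 : mu <> 0) by (intros H; rewrite H in Hmu; simpl in Hmu; lra).
  pose proof (Cmod_sub_lt_add a mu Hconj) as Hlt.
  apply (riccati_ivp_converges_of_linearization k a s mu
    (fun t => ((a + mu) * Cexp (mu * t) - (a - mu)) / mu) (Cmod (a + mu) * Re mu / Cmod mu));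
    auto.
  - replace (mu * 0) with (RtoC 0) by ring; rewrite Cexp_0; field; exact Hmu0.
  - intros t _.
    derive_up_to_eq (is_derive_Cmult (fun u => (a + mu) * Cexp (mu * u) - (a - mu)) (fun _ => / mu)
      t _ _
      (is_derive_Cplus (fun u => (a + mu) * Cexp (mu * u)) (fun _ => - (a - mu)) t _ _
        (is_derive_Cmult (fun _ => a + mu) (fun u => Cexp (mu * u)) t _ _
          (is_derive_Cconst (a + mu) t) (is_derive_Cexp_scal mu t))
        (is_derive_Cconst (- (a - mu)) t))
      (is_derive_Cconst (/ mu) t)).
    field; exact Hmu0.
  - pose proof (Cmod_ge_0 (a - mu)); pose proof (proj1 (Cmod_gt_0 mu) Hmu0).
    apply Rdiv_lt_0_compat; [apply Rmult_lt_0_compat |]; lra.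
  - intros t Ht; apply Cmod_exp_growth; auto.
Qed.

Theorem riccati_ivp_converges_of_Re_pos (k a s : C) :
  k <> 0 -> 0 < Re a -> Im (k * s) = 0 -> (Im a = 0 -> 4 * Re (k * s) <= Re a ^ 2)%R ->
  riccati_ivp_converges k a s.
Proof.
  intros Hk Ha Hks Hreal.
  set (D := a * a - 4 * k * s).
  assert (HImD : Im D = Im (a * a))
    by (unfold D; destruct a, k, s; unfold Re, Im in *; simpl in *; lra).
  assert (HD : D = 0 \/ (Im D = 0 -> 0 < Re D)).
  { destruct (Req_dec (Im a) 0) as [Hi | Hi].
    - assert (HIm0 : Im D = 0%R)
        by (rewrite HImD; destruct a; unfold Re, Im in *; simpl in *; rewrite Hi; ring).
      assert (HRe0 : (0 <= Re D)%R).
      { specialize (Hreal Hi); unfold D; destruct a, k, s; unfold Re, Im in *; simpl in *.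
        rewrite Hi in *; nra. }
      destruct (Req_dec (Re D) 0) as [HRe | HRe]; [left | right; intros _; lra].
      apply injective_projections; [exact HRe | exact HIm0].
    - right; intros H; exfalso; apply Hi.
      rewrite HImD in H; destruct a; unfold Re, Im in *; simpl in *; nra. }
  destruct HD as [HD | HD].
  - apply riccati_ivp_converges_double_root; auto.
  - destruct (exists_sqrt_Re_pos D HD) as [mu [Hmu HmuD]].
    apply (riccati_ivp_converges_simple_root k a s mu); auto.
    apply Re_mul_Cconj_pos; auto.
    rewrite HmuD; exact HImD.
Qed.

Lemma is_riccati_solution_iff (kappa gamma chi omega Omega : R) (F : R -> C) :
  is_riccati_solution kappa gamma chi omega Omega F <->
  riccati_ivp_solution kappa (gamma, Omega - omega)%R (gamma * chi / 2)%R F.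
Proof.
  assert (Ha : RtoC gamma + Ci * RtoC Omega - Ci * RtoC omega = (gamma, Omega - omega)%R)
    by (apply injective_projections; simpl; ring).
  unfold is_riccati_solution, riccati_ivp_solution, riccati_rhs, riccati.
  rewrite Ha; reflexivity.
Qed.

Close Scope C_scope.

Theorem theorem2 (kappa gamma chi omega : R) :
  0 < kappa -> 0 < gamma -> 2 * kappa * chi <= gamma ->
  exists eps : R, 0 < eps /\
    forall Omega : R, Rabs (omega - Omega) <= eps ->
      (exists F : R -> C, is_riccati_solution kappa gamma chi omega Omega F) /\
      (forall F : R -> C, is_riccati_solution kappa gamma chi omega Omega F ->
         converges_at_infty F).
Proof.
  intros Hk Hg Hc.
  (* The conclusion holds for every Omega, so any eps works. *)
  exists 1%R; split; [lra |]; intros Omega _.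
  destruct (riccati_ivp_converges_of_Re_pos kappa (gamma, Omega - omega)%R (gamma * chi / 2)%R)
    as [[F HF] Hconv].
  - intros H; injection H; lra.
  - simpl; exact Hg.
  - simpl; ring.
  - simpl; intros _; nra.
  - split.
    + exists F; apply is_riccati_solution_iff; exact HF.
    + intros F' HF'; apply Hconv, is_riccati_solution_iff, HF'.
Qed.
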